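(* Let $\Delta$ be a repository, $C\in\mathrm{dom}(\Delta)$ with $C:\Delta(C)\in\Delta$, $E_1,\ldots,E_m$ combinatory terms, $\tau\in\mathbb{T}_C$ and $k\in\mathbb{N}$. The following are equivalent: (1) $\Delta\vdash_k C\,E_1\cdots E_m:\tau$; (2) there exists a set of paths $P\subseteq\mathbb{P}_m\big(\bigcap\{S(\Delta(C))\mid\mathrm{level}(S)\le k,\ \mathrm{atoms}(S)\subseteq\mathrm{atoms}(\Delta)\cup\mathrm{atoms}(\tau)\}\big)$ such that (a) $\bigcap_{\pi\in P}\mathrm{tgt}_m(\pi)\le\tau$ and (b) $\Delta\vdash_k E_i:\bigcap_{\pi\in P}\mathrm{arg}_i(\pi)$ for $1\le i\le m$.
   Context: Types $\mathbb{T}_C\ni\tau ::= a\mid\alpha\mid\omega\mid\tau_1\to\tau_2\mid\tau_1\cap\tau_2\mid c(\tau)$ ($a$ constants, $\alpha$ type variables, $c$ unary constructors). Subtyping $\le$: least preorder with $\sigma\le\omega$; $\omega\le\omega\to\omega$; $\sigma\cap\tau\le\sigma$; $\sigma\cap\tau\le\tau$; $\sigma\le\tau_1,\sigma\le\tau_2\Rightarrow\sigma\le\tau_1\cap\tau_2$; $(\sigma\to\tau_1)\cap(\sigma\to\tau_2)\le\sigma\to\tau_1\cap\tau_2$; $\sigma_2\le\sigma_1,\tau_1\le\tau_2\Rightarrow\sigma_1\to\tau_1\le\sigma_2\to\tau_2$; $\tau_1\le\tau_2\Rightarrow c(\tau_1)\le c(\tau_2)$; $c(\tau_1)\cap c(\tau_2)\le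 c(\tau_1\cap\tau_2)$. Level: $0$ for $\omega,a,\alpha$; $\mathrm{level}(c(\tau))=1+\mathrm{level}(\tau)$; $\mathrm{level}(\sigma\to\tau)=1+\max(\mathrm{level}(\sigma),\mathrm{level}(\tau))$; $\mathrm{level}(\sigma\cap\tau)=\max(\mathrm{level}(\sigma),\mathrm{level}(\tau))$; for a substitution $S$, $\mathrm{level}(S)=\max_{\alpha\in\mathrm{dom}(S)}\mathrm{level}(S(\alpha))$. A repository $\Delta$ is a finite set of $C:\tau$ with distinct names; $\Delta(C)$ is the type of $C$. Combinatory terms $E::=C\mid(E\,E')$. Rules of $\Delta\vdash_k$: from $C:\tau\in\Delta$ and $\mathrm{level}(S)\le k$ infer $\Delta\vdash_k C:S(\tau)$; $\to$-elimination; $\cap$-introduction; subsumption along $\le$. Paths: $\pi ::= a\mid\alpha\mid\sigma\to\pi\mid c(\omega)\mid c(\pi)$. The set of paths of a type: $\mathbb{P}(a)=\{a\}$, $\mathbb{P}(\alpha)=\{\alpha\}$, $\mathbb{P}(\omega)=\emptyset$, $\mathbb{P}(\sigma\to\tau)=\{\sigma\to\pi\mid\pi\in\mathbb{P}(\tau)\}$, $\mathbb{P}(\sigma\cap\tau)=\mathbb{P}(\sigma)\cup\mathbb{P}(\tau)$, $\mathbb{P}(c(\tau))=\{c(\omega)\}$ if $\mathbb{P}(\tau)=\emptyset$ and $\{c(\pi)\mid\pi\in\mathbb{P}(\tau)\}$ otherwise. A path has arity at least $m$ if it is $\sigma_1\to\cdots\to\sigma_m\to\tau$; then $\mathrm{arg}_i(\pi)=\sigma_i$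 and $\mathrm{tgt}_m(\pi)=\tau$. $\mathbb{P}_m(\tau)$ is the set of paths in $\mathbb{P}(\tau)$ of arity at least $m$. The intersection of an empty family is $\omega$. $\mathrm{atoms}(\tau)$ is the set of constants, type variables and constructor names occurring in $\tau$; $\mathrm{atoms}(S)=\bigcup_{\alpha\in\mathrm{dom}(S)}\mathrm{atoms}(S(\alpha))$; $\mathrm{atoms}(\Delta)=\bigcup_{C:\tau\in\Delta}\mathrm{atoms}(\tau)$. The intersection over substitutions in (2) is taken modulo type equivalence $=$ (there are only finitely many such instances up to $=$). *)

From Stdlib Require Import List Arith.
Import ListNotations.

Inductive ty : Type :=
| Const (a : nat)
| TVar (alpha : nat)
| Omega
| Arr (s t : ty)
| Inter (s t : ty)
| Ctor (c : nat) (t : ty).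

Inductive sub : ty -> ty -> Prop :=
| sub_refl s : sub s s
| sub_trans s t u : sub s t -> sub t u -> sub s u
| sub_omega s : sub s Omega
| sub_omega_arr : sub Omega (Arr Omega Omega)
| sub_inter_l s t : sub (Inter s t) s
| sub_inter_r s t : sub (Inter s t) t
| sub_inter_intro s t1 t2 : sub s t1 -> sub s t2 -> sub s (Inter t1 t2)
| sub_arr_dist s t1 t2 : sub (Inter (Arr s t1) (Arr s t2)) (Arr s (Inter t1 t2))
| sub_arr s1 s2 t1 t2 : sub s2 s1 -> sub t1 t2 -> sub (Arr s1 t1) (Arr s2 t2)
| sub_ctor c t1 t2 : sub t1 t2 -> sub (Ctor c t1) (Ctor c t2)
| sub_ctor_dist c t1 t2 : sub (Inter (Ctor c t1) (Ctor c t2)) (Ctor c (Inter t1 t2)).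

Definition ty_equiv (s t : ty) : Prop := sub s t /\ sub t s.

Fixpoint level (t : ty) : nat :=
  match t with
  | Const _ | TVar _ | Omega => 0
  | Ctor _ t => S (level t)
  | Arr s t => S (Nat.max (level s) (level t))
  | Inter s t => Nat.max (level s) (level t)
  end.

Definition subst := list (nat * ty).
Definition wf_subst (S : subst) : Prop := NoDup (map fst S).

Definition subst_var (S : subst) (n : nat) : ty :=
  match find (fun p => Nat.eqb (fst p) n) S with
  | Some p => snd p
  | None => TVar n
  end.

Fixpoint apply_subst (S : subst) (t : ty) : ty :=
  match t with
  | Const a => Const a
  | TVar n => subst_var S n
  | Omega => Omega
  | Arr s t => Arr (apply_subst S s) (apply_subst S t)
  | Inter s t => Inter (apply_subst S s) (apply_subst S t)
  | Ctor c t => Ctor c (apply_subst S t)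
  end.

Definition level_subst (S : subst) : nat :=
  fold_right Nat.max 0 (map (fun p => level (snd p)) S).

Inductive atom : Type :=
| AConst (a : nat)
| AVar (alpha : nat)
| ACtor (c : nat).

Fixpoint atoms_ty (t : ty) : list atom :=
  match t with
  | Const a => [AConst a]
  | TVar n => [AVar n]
  | Omega => []
  | Arr s t => atoms_ty s ++ atoms_ty t
  | Inter s t => atoms_ty s ++ atoms_ty t
  | Ctor c t => ACtor c :: atoms_ty t
  end.

Definition atoms_subst (S : subst) : list atom :=
  flat_map (fun p => atoms_ty (snd p)) S.

Definition repo := list (nat * ty).
Definition repo_wf (D : repo) : Prop := NoDup (map fst D).

Definition atoms_repo (D : repo) : list atom :=
  flat_map (fun p => atoms_ty (snd p)) D.

Inductive term : Type :=
| Comb (C : nat)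
| App (E F : term).

Definition apps (E : term) (Es : list term) : term := fold_left App Es E.

Inductive typed (D : repo) (k : nat) : term -> ty -> Prop :=
| T_var C t S : In (C, t) D -> wf_subst S -> level_subst S <= k ->
    typed D k (Comb C) (apply_subst S t)
| T_app E F s t : typed D k E (Arr s t) -> typed D k F s -> typed D k (App E F) t
| T_inter E s t : typed D k E s -> typed D k E t -> typed D k E (Inter s t)
| T_sub E s t : typed D k E s -> sub s t -> typed D k E t.

Fixpoint paths (t : ty) : list ty :=
  match t with
  | Const a => [Const a]
  | TVar n => [TVar n]
  | Omega => []
  | Arr s t => map (Arr s) (paths t)
  | Inter s t => paths s ++ paths t
  | Ctor c t =>
      match paths t with
      | [] => [Ctor c Omega]
      | ps => map (Ctor c) ps
      end
  end.

Fixpoint arity_ge (m : nat) (p : ty) : Prop :=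
  match m with
  | 0 => True
  | S m' => match p with Arr _ t => arity_ge m' t | _ => False end
  end.

(* arg i (0-indexed; the paper's arg_{i+1}) *)
Fixpoint arg (i : nat) (p : ty) : ty :=
  match i, p with
  | 0, Arr s _ => s
  | S i', Arr _ t => arg i' t
  | _, _ => Omega
  end.

Fixpoint tgt (m : nat) (p : ty) : ty :=
  match m, p with
  | 0, p => p
  | S m', Arr _ t => tgt m' t
  | _, _ => Omega
  end.

Fixpoint bigcap (l : list ty) : ty :=
  match l with
  | [] => Omega
  | [x] => x
  | x :: l' => Inter x (bigcap l')
  end.

Definition admissible (D : repo) (tau : ty) (k : nat) (S : subst) : Prop :=
  wf_subst S /\ level_subst S <= k /\
  incl (atoms_subst S) (atoms_repo D ++ atoms_ty tau).

(* (1) => (2): erasing every atom outside atoms(Delta) u atoms(tau), i.e.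
   replacing it by omega, is monotone for subtyping and fixes tau, so a
   derivation of C E1 ... Em : tau can be normalised to use only admissible
   instances of Delta(C).  Inverting this derivation along the applicative
   spine shows that tau lies above the intersection of the m-th targets of
   some paths of admissible instances, whose i-th arguments are inhabited by
   the Ei.  Paths are prime for subtyping (an intersection of paths below a
   path has a member below it), so each of these paths is refined by a path
   of the intersection of all admissible instances, which has contravariantly
   larger arguments and a smaller target.
   (2) => (1): C has the intersection of the admissible instances, hence the
   intersection of the chosen paths, and m applications give the result. *)
From Stdlib Require Import List Arith Lia ClassicalEpsilon.
Import ListNotations.

Lemma bigcap_lb l x : In x l -> sub (bigcap l) x.
Proof.
  induction l as [|y [|z l] IH]; intros Hx; [destruct Hx| |].
  - destruct Hx as [<-|[]]; apply sub_refl.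
  - destruct Hx as [<-|Hx]; [apply sub_inter_l|].
    apply sub_trans with (bigcap (z :: l)); [apply sub_inter_r|apply IH, Hx].
Qed.

Lemma bigcap_glb l s : (forall x, In x l -> sub s x) -> sub s (bigcap l).
Proof.
  induction l as [|y [|z l] IH]; intros H; [apply sub_omega|apply H; left; reflexivity|].
  apply sub_inter_intro; [apply H; left; reflexivity|].
  apply IH; intros x Hx; apply H; right; exact Hx.
Qed.

Lemma bigcap_incl l1 l2 : incl l2 l1 -> sub (bigcap l1) (bigcap l2).
Proof. intros H; apply bigcap_glb; intros x Hx; apply bigcap_lb, H, Hx. Qed.

Lemma bigcap_app l1 l2 : sub (Inter (bigcap l1) (bigcap l2)) (bigcap (l1 ++ l2)).
Proof.
  apply bigcap_glb; intros x Hx; apply in_app_or in Hx as [Hx|Hx].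
  - apply sub_trans with (bigcap l1); [apply sub_inter_l|apply bigcap_lb, Hx].
  - apply sub_trans with (bigcap l2); [apply sub_inter_r|apply bigcap_lb, Hx].
Qed.

Lemma bigcap_map_sub {X Y : Type} (f : X -> ty) (g : Y -> ty) l1 l2 :
  (forall y, In y l2 -> exists x, In x l1 /\ sub (f x) (g y)) ->
  sub (bigcap (map f l1)) (bigcap (map g l2)).
Proof.
  intros H; apply bigcap_glb; intros z Hz.
  apply in_map_iff in Hz as [y [<- Hy]]; destruct (H y Hy) as [x [Hx Hxy]].
  apply sub_trans with (f x); [apply bigcap_lb, in_map, Hx|exact Hxy].
Qed.

Lemma bigcap_flat {X : Type} (f : ty -> list X) l :
  f Omega = [] -> (forall a b, f (Inter a b) = f a ++ f b) ->
  f (bigcap l) = flat_map f l.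
Proof.
  intros H0 HI; induction l as [|a [|b l] IH]; [exact H0| |].
  - simpl; rewrite app_nil_r; reflexivity.
  - change (f (Inter a (bigcap (b :: l))) = f a ++ flat_map f (b :: l)).
    rewrite HI, IH; reflexivity.
Qed.

Lemma Omega_sub_Arr s : sub Omega (Arr s Omega).
Proof.
  apply sub_trans with (Arr Omega Omega); [apply sub_omega_arr|].
  apply sub_arr; apply sub_omega.
Qed.

Lemma bigcap_map_Arr s l : sub (bigcap (map (Arr s) l)) (Arr s (bigcap l)).
Proof.
  induction l as [|a [|b l] IH]; [apply Omega_sub_Arr|apply sub_refl|].
  apply sub_trans with (Inter (Arr s a) (Arr s (bigcap (b :: l)))); [|apply sub_arr_dist].
  apply sub_inter_intro; [apply sub_inter_l|].
  apply sub_trans with (bigcap (map (Arr s) (b :: l))); [apply sub_inter_r|exact IH].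
Qed.

Lemma bigcap_map_Ctor c l : l <> [] -> sub (bigcap (map (Ctor c) l)) (Ctor c (bigcap l)).
Proof.
  induction l as [|a [|b l] IH]; intros Hl; [congruence|apply sub_refl|].
  apply sub_trans with (Inter (Ctor c a) (Ctor c (bigcap (b :: l)))); [|apply sub_ctor_dist].
  apply sub_inter_intro; [apply sub_inter_l|].
  apply sub_trans with (bigcap (map (Ctor c) (b :: l))); [apply sub_inter_r|].
  apply IH; discriminate.
Qed.

Inductive is_path : ty -> Prop :=
| path_Const a : is_path (Const a)
| path_TVar n : is_path (TVar n)
| path_Arr s t : is_path t -> is_path (Arr s t)
| path_Ctor_Omega c : is_path (Ctor c Omega)
| path_Ctor c t : is_path t -> is_path (Ctor c t).

Lemma paths_is_path t p : In p (paths t) -> is_path p.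
Proof.
  revert p; induction t as [a|n| |s _ t IHt|s IHs t IHt|c t IHt]; simpl; intros p Hp.
  - destruct Hp as [<-|[]]; constructor.
  - destruct Hp as [<-|[]]; constructor.
  - destruct Hp.
  - apply in_map_iff in Hp as [q [<- Hq]]; constructor; apply IHt, Hq.
  - apply in_app_or in Hp as [Hp|Hp]; auto.
  - destruct (paths t) as [|q l].
    + destruct Hp as [<-|[]]; constructor.
    + change (In p (map (Ctor c) (q :: l))) in Hp.
      apply in_map_iff in Hp as [q' [<- Hq]]; constructor; apply IHt, Hq.
Qed.

Lemma paths_sub t p : In p (paths t) -> sub t p.
Proof.
  revert p; induction t as [a|n| |s _ t IHt|s IHs t IHt|c t IHt]; simpl; intros p Hp.
  - destruct Hp as [<-|[]]; apply sub_refl.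
  - destruct Hp as [<-|[]]; apply sub_refl.
  - destruct Hp.
  - apply in_map_iff in Hp as [q [<- Hq]]; apply sub_arr; [apply sub_refl|apply IHt, Hq].
  - apply in_app_or in Hp as [Hp|Hp].
    + apply sub_trans with s; [apply sub_inter_l|apply IHs, Hp].
    + apply sub_trans with t; [apply sub_inter_r|apply IHt, Hp].
  - destruct (paths t) as [|q l].
    + destruct Hp as [<-|[]]; apply sub_ctor, sub_omega.
    + change (In p (map (Ctor c) (q :: l))) in Hp.
      apply in_map_iff in Hp as [q' [<- Hq]]; apply sub_ctor, IHt, Hq.
Qed.

Lemma bigcap_paths_sub t : sub (bigcap (paths t)) t.
Proof.
  induction t as [a|n| |s _ t IHt|s IHs t IHt|c t IHt]; simpl; try apply sub_refl.
  - apply sub_trans with (Arr s (bigcap (paths t))); [apply bigcap_map_Arr|].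
    apply sub_arr; [apply sub_refl|exact IHt].
  - apply sub_inter_intro.
    + apply sub_trans with (bigcap (paths s)); [|exact IHs].
      apply bigcap_incl, incl_appl, incl_refl.
    + apply sub_trans with (bigcap (paths t)); [|exact IHt].
      apply bigcap_incl, incl_appr, incl_refl.
  - destruct (paths t) as [|q l].
    + apply sub_ctor, IHt.
    + apply sub_trans with (Ctor c (bigcap (q :: l)));
        [apply (bigcap_map_Ctor c (q :: l)); discriminate|].
      apply sub_ctor, IHt.
Qed.

(* Subtyping is decidable, but a boolean test is only needed to define
   [arr_cods], so we take one classically. *)
Definition subb (s t : ty) : bool :=
  if excluded_middle_informative (sub s t) then true else false.

Lemma subb_true s t : subb s t = true <-> sub s t.
Proof. unfold subb; destruct excluded_middle_informative; split; congruence || tauto. Qed.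

Fixpoint top_atoms (t : ty) : list ty :=
  match t with
  | Const a => [Const a]
  | TVar n => [TVar n]
  | Inter t1 t2 => top_atoms t1 ++ top_atoms t2
  | _ => []
  end.

(* [bigcap (arr_cods s t)] is what [t] yields when applied to an argument of
   type [s]; its monotonicity in [t] is how subtyping against an arrow is
   inverted. *)
Fixpoint arr_cods (s t : ty) : list ty :=
  match t with
  | Arr s' t' => if subb s s' then [t'] else []
  | Inter t1 t2 => arr_cods s t1 ++ arr_cods s t2
  | _ => []
  end.

Fixpoint ctor_args (c : nat) (t : ty) : list ty :=
  match t with
  | Ctor c' t' => if Nat.eqb c c' then [t'] else []
  | Inter t1 t2 => ctor_args c t1 ++ ctor_args c t2
  | _ => []
  end.

Lemma top_atoms_anti t u : sub t u -> incl (top_atoms u) (top_atoms t).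
Proof.
  induction 1; simpl; intros x Hx; try tauto.
  - apply IHsub1, IHsub2, Hx.
  - apply in_or_app; left; exact Hx.
  - apply in_or_app; right; exact Hx.
  - apply in_app_or in Hx as [Hx|Hx]; auto.
Qed.

Lemma arr_cods_mono t u s : sub t u -> sub (bigcap (arr_cods s t)) (bigcap (arr_cods s u)).
Proof.
  induction 1 as [| t1 t2 t3 _ IH1 _ IH2 | | | | | t0 t1 t2 _ IH1 _ IH2 | s' t1 t2
                  | s1 s2 t1 t2 Hs _ Ht _ | |]; simpl.
  - apply sub_refl.
  - apply sub_trans with (bigcap (arr_cods s t2)); assumption.
  - apply sub_omega.
  - destruct (subb s Omega); apply sub_omega.
  - apply bigcap_incl, incl_appl, incl_refl.
  - apply bigcap_incl, incl_appr, incl_refl.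
  - apply sub_trans with (Inter (bigcap (arr_cods s t1)) (bigcap (arr_cods s t2)));
      [apply sub_inter_intro; assumption|apply bigcap_app].
  - destruct (subb s s'); apply sub_refl.
  - destruct (subb s s2) eqn:E; [|apply sub_omega].
    rewrite (proj2 (subb_true s s1)); [exact Ht|].
    apply sub_trans with s2; [apply subb_true, E|exact Hs].
  - apply sub_refl.
  - apply sub_refl.
Qed.

Lemma ctor_args_mono t u c : sub t u -> sub (bigcap (ctor_args c t)) (bigcap (ctor_args c u)).
Proof.
  induction 1 as [| t1 t2 t3 _ IH1 _ IH2 | | | | | t0 t1 t2 _ IH1 _ IH2 |
                  | | c' t1 t2 Ht _ | c' t1 t2]; simpl.
  - apply sub_refl.
  - apply sub_trans with (bigcap (ctor_args c t2)); assumption.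
  - apply sub_omega.
  - apply sub_refl.
  - apply bigcap_incl, incl_appl, incl_refl.
  - apply bigcap_incl, incl_appr, incl_refl.
  - apply sub_trans with (Inter (bigcap (ctor_args c t1)) (bigcap (ctor_args c t2)));
      [apply sub_inter_intro; assumption|apply bigcap_app].
  - apply sub_refl.
  - apply sub_refl.
  - destruct (Nat.eqb c c'); [exact Ht|apply sub_refl].
  - destruct (Nat.eqb c c'); apply sub_refl.
Qed.

Lemma ctor_args_nil t u c : sub t u -> ctor_args c t = [] -> ctor_args c u = [].
Proof.
  induction 1; simpl; intros Hnil; auto.
  - apply app_eq_nil in Hnil as [Hnil _]; exact Hnil.
  - apply app_eq_nil in Hnil as [_ Hnil]; exact Hnil.
  - rewrite IHsub1, IHsub2 by exact Hnil; reflexivity.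
  - destruct (Nat.eqb c c0); [discriminate|reflexivity].
  - destruct (Nat.eqb c c0); [discriminate|reflexivity].
Qed.

(* The argument of the path [Ctor c Omega] is not a path, so primality is
   proved for this larger class. *)
Definition path_or_Omega (t : ty) : Prop := is_path t \/ t = Omega.

Lemma top_atoms_path q x : path_or_Omega q -> In x (top_atoms q) -> q = x.
Proof.
  intros [Hq| ->] Hx; [|destruct Hx].
  destruct Hq; simpl in Hx; try tauto; destruct Hx as [<-|[]]; reflexivity.
Qed.

Lemma arr_cods_path q s r : path_or_Omega q -> In r (arr_cods s q) ->
  exists s', q = Arr s' r /\ sub s s' /\ is_path r.
Proof.
  intros [Hq| ->] Hr; [|destruct Hr].
  destruct Hq as [| |s' t Ht| |]; simpl in Hr; try tauto.
  destruct (subb s s') eqn:E; [|destruct Hr].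
  destruct Hr as [<-|[]]; exists s'; split; [|split]; auto; apply subb_true, E.
Qed.

Lemma ctor_args_path q c r : path_or_Omega q -> In r (ctor_args c q) ->
  q = Ctor c r /\ path_or_Omega r.
Proof.
  intros [Hq| ->] Hr; [|destruct Hr].
  destruct Hq as [a|n|s t Ht|c'|c' t Ht]; simpl in Hr; try tauto.
  all: destruct (Nat.eqb_spec c c') as [->|_]; [destruct Hr as [<-|[]]|destruct Hr].
  all: split; [reflexivity|unfold path_or_Omega; auto].
Qed.

Lemma top_atom_mem x Q : (forall q, In q Q -> path_or_Omega q) ->
  sub (bigcap Q) x -> In x (top_atoms x) -> In x Q.
Proof.
  intros HQ Hsub Hx.
  apply (top_atoms_anti _ _ Hsub) in Hx; rewrite (bigcap_flat top_atoms) in Hx by reflexivity.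
  apply in_flat_map in Hx as [q [Hq Hx]].
  rewrite <- (top_atoms_path q x (HQ q Hq) Hx); exact Hq.
Qed.

Lemma path_prime p Q : is_path p -> (forall q, In q Q -> path_or_Omega q) ->
  sub (bigcap Q) p -> exists q, In q Q /\ sub q p.
Proof.
  intros Hp; revert Q; induction Hp as [a|n|s t _ IH|c|c t _ IH]; intros Q HQ Hsub.
  - exists (Const a); split; [|apply sub_refl].
    apply (top_atom_mem _ Q HQ Hsub); left; reflexivity.
  - exists (TVar n); split; [|apply sub_refl].
    apply (top_atom_mem _ Q HQ Hsub); left; reflexivity.
  - pose proof (arr_cods_mono _ _ s Hsub) as Hcod; simpl in Hcod.
    rewrite (proj2 (subb_true s s) (sub_refl s)), (bigcap_flat (arr_cods s)) in Hcod
      by reflexivity.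
    destruct (IH _ ltac:(intros r Hr; apply in_flat_map in Hr as [q [Hq Hr]];
                         destruct (arr_cods_path q s r (HQ q Hq) Hr) as [? [_ [_ ?]]];
                         left; assumption) Hcod) as [r [Hr Hrt]].
    apply in_flat_map in Hr as [q [Hq Hr]].
    destruct (arr_cods_path q s r (HQ q Hq) Hr) as [s' [-> [Hs _]]].
    exists (Arr s' r); split; [exact Hq|apply sub_arr; assumption].
  - assert (Hargs : ctor_args c (bigcap Q) <> []).
    { intros Hnil; apply (ctor_args_nil _ _ c Hsub) in Hnil; simpl in Hnil.
      rewrite Nat.eqb_refl in Hnil; discriminate. }
    rewrite (bigcap_flat (ctor_args c)) in Hargs by reflexivity.
    destruct (flat_map (ctor_args c) Q) as [|r l] eqn:E; [congruence|].
    assert (Hr : In r (flat_map (ctor_args c) Q)) by (rewrite E; left; reflexivity).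
    apply in_flat_map in Hr as [q [Hq Hr]].
    destruct (ctor_args_path q c r (HQ q Hq) Hr) as [-> _].
    exists (Ctor c r); split; [exact Hq|apply sub_ctor, sub_omega].
  - pose proof (ctor_args_mono _ _ c Hsub) as Harg; simpl in Harg.
    rewrite Nat.eqb_refl, (bigcap_flat (ctor_args c)) in Harg by reflexivity.
    destruct (IH _ ltac:(intros r Hr; apply in_flat_map in Hr as [q [Hq Hr]];
                         apply (ctor_args_path q c r (HQ q Hq) Hr)) Harg) as [r [Hr Hrt]].
    apply in_flat_map in Hr as [q [Hq Hr]].
    destruct (ctor_args_path q c r (HQ q Hq) Hr) as [-> _].
    exists (Ctor c r); split; [exact Hq|apply sub_ctor, Hrt].
Qed.

Lemma sub_Arr_path_inv q s p : is_path q -> is_path p -> sub q (Arr s p) ->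
  exists s' p', q = Arr s' p' /\ sub s s' /\ sub p' p.
Proof.
  intros Hq Hp Hsub.
  pose proof (arr_cods_mono _ _ s Hsub) as Hcod; simpl in Hcod.
  rewrite (proj2 (subb_true s s) (sub_refl s)) in Hcod.
  destruct (path_prime p (arr_cods s q) Hp) as [r [Hr Hrp]]; [| exact Hcod |].
  - intros r Hr; destruct (arr_cods_path q s r (or_introl Hq) Hr) as [_ [_ [_ ?]]].
    left; assumption.
  - destruct (arr_cods_path q s r (or_introl Hq) Hr) as [s' [-> [Hs _]]].
    exists s', r; auto.
Qed.

Lemma sub_path_arity m q p : is_path q -> is_path p -> arity_ge m p -> sub q p ->
  arity_ge m q /\ (forall i, i < m -> sub (arg i p) (arg i q)) /\ sub (tgt m q) (tgt m p).
Proof.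
  revert q p; induction m as [|m IH]; intros q p Hq Hp Har Hsub.
  - repeat split; auto; intros i Hi; lia.
  - destruct p as [| | |s p| |]; try destruct Har.
    inversion Hp as [| |? ? Hp'| |]; subst.
    destruct (sub_Arr_path_inv q s p Hq Hp' Hsub) as [s' [q' [-> [Hs Hq'p]]]].
    inversion Hq as [| |? ? Hq'| |]; subst.
    destruct (IH q' p Hq' Hp' Har Hq'p) as [Har' [Harg Htgt]].
    repeat split; auto.
    intros [|i] Hi; simpl; [exact Hs|apply Harg; lia].
Qed.

Lemma sub_path_paths t p : is_path p -> sub t p -> exists q, In q (paths t) /\ sub q p.
Proof.
  intros Hp Hsub; apply path_prime; [exact Hp| |].
  - intros q Hq; left; apply (paths_is_path t q Hq).
  - apply sub_trans with t; [apply bigcap_paths_sub|exact Hsub].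
Qed.

Lemma atom_eq_dec (x y : atom) : {x = y} + {x <> y}.
Proof. decide equality; apply Nat.eq_dec. Qed.

Fixpoint restrict (A : list atom) (t : ty) : ty :=
  match t with
  | Const a => if in_dec atom_eq_dec (AConst a) A then Const a else Omega
  | TVar n => if in_dec atom_eq_dec (AVar n) A then TVar n else Omega
  | Omega => Omega
  | Arr s u => Arr (restrict A s) (restrict A u)
  | Inter s u => Inter (restrict A s) (restrict A u)
  | Ctor c u => if in_dec atom_eq_dec (ACtor c) A then Ctor c (restrict A u) else Omega
  end.

Definition restrict_subst (A : list atom) (S : subst) : subst :=
  map (fun p => (fst p, restrict A (snd p))) S.

Lemma restrict_sub A s t : sub s t -> sub (restrict A s) (restrict A t).
Proof.
  induction 1; simpl.
  all: try solve [constructor; assumption | apply sub_trans with (restrict A t); assumption].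
  - destruct in_dec; [apply sub_ctor; assumption|apply sub_refl].
  - destruct in_dec; [apply sub_ctor_dist|apply sub_inter_l].
Qed.

Lemma restrict_id A t : incl (atoms_ty t) A -> restrict A t = t.
Proof.
  induction t; simpl; intros H; try reflexivity.
  - destruct in_dec as [_|Hn]; [reflexivity|contradiction (Hn (H _ (or_introl eq_refl)))].
  - destruct in_dec as [_|Hn]; [reflexivity|contradiction (Hn (H _ (or_introl eq_refl)))].
  - rewrite IHt1, IHt2 by (intros x Hx; apply H, in_or_app; auto); reflexivity.
  - rewrite IHt1, IHt2 by (intros x Hx; apply H, in_or_app; auto); reflexivity.
  - destruct in_dec as [_|Hn]; [|contradiction (Hn (H _ (or_introl eq_refl)))].
    rewrite IHt by (intros x Hx; apply H; right; exact Hx); reflexivity.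
Qed.

Lemma restrict_apply_subst A S t : incl (atoms_ty t) A ->
  restrict A (apply_subst S t) = apply_subst (restrict_subst A S) t.
Proof.
  induction t; simpl; intros H; try reflexivity.
  - destruct in_dec as [_|Hn]; [reflexivity|contradiction (Hn (H _ (or_introl eq_refl)))].
  - unfold subst_var; induction S as [|[m u] S IHS]; simpl.
    + destruct in_dec as [_|Hn]; [reflexivity|contradiction (Hn (H _ (or_introl eq_refl)))].
    + destruct (Nat.eqb m alpha); [reflexivity|exact IHS].
  - rewrite IHt1, IHt2 by (intros x Hx; apply H, in_or_app; auto); reflexivity.
  - rewrite IHt1, IHt2 by (intros x Hx; apply H, in_or_app; auto); reflexivity.
  - destruct in_dec as [_|Hn]; [|contradiction (Hn (H _ (or_introl eq_refl)))].
    rewrite IHt by (intros x Hx; apply H; right; exact Hx); reflexivity.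
Qed.

Lemma level_restrict A t : level (restrict A t) <= level t.
Proof. induction t; simpl; repeat destruct in_dec; simpl; lia. Qed.

Lemma atoms_restrict A t : incl (atoms_ty (restrict A t)) A.
Proof.
  induction t; simpl; repeat destruct in_dec; simpl;
    try (intros x [<-|[]]; assumption); try apply incl_nil_l.
  - apply incl_app; assumption.
  - apply incl_app; assumption.
  - apply incl_cons; assumption.
Qed.

Lemma wf_restrict_subst A S : wf_subst S -> wf_subst (restrict_subst A S).
Proof. unfold wf_subst, restrict_subst; rewrite map_map; exact (fun H => H). Qed.

Lemma level_restrict_subst A S : level_subst (restrict_subst A S) <= level_subst S.
Proof.
  unfold level_subst; induction S as [|[m u] S IH]; simpl; [lia|].
  pose proof (level_restrict A u); lia.
Qed.

Lemma atoms_restrict_subst A S : incl (atoms_subst (restrict_subst A S)) A.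
Proof.
  intros x Hx; apply in_flat_map in Hx as [[m u] [Hp Hx]].
  apply in_map_iff in Hp as [[m' u'] [Heq _]]; injection Heq as -> <-.
  exact (atoms_restrict A u' x Hx).
Qed.

Inductive typed_by (D : repo) (ok : subst -> Prop) : term -> ty -> Prop :=
| TB_var C t S : In (C, t) D -> ok S -> typed_by D ok (Comb C) (apply_subst S t)
| TB_app E F s t : typed_by D ok E (Arr s t) -> typed_by D ok F s -> typed_by D ok (App E F) t
| TB_inter E s t : typed_by D ok E s -> typed_by D ok E t -> typed_by D ok E (Inter s t)
| TB_sub E s t : typed_by D ok E s -> sub s t -> typed_by D ok E t.

Lemma typed_by_typed D k (ok : subst -> Prop) E t :
  (forall S, ok S -> wf_subst S /\ level_subst S <= k) ->
  typed_by D ok E t -> typed D k E t.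
Proof.
  intros Hok; induction 1 as [C t S HC HS| | |].
  - destruct (Hok S HS); apply T_var; assumption.
  - eapply T_app; eassumption.
  - apply T_inter; assumption.
  - eapply T_sub; eassumption.
Qed.

Lemma typed_restrict D k A E t : incl (atoms_repo D) A -> typed D k E t ->
  typed_by D (fun S => wf_subst S /\ level_subst S <= k /\ incl (atoms_subst S) A)
    E (restrict A t).
Proof.
  intros HA; induction 1 as [C t S HC Hwf Hlev| | |].
  - rewrite restrict_apply_subst.
    + apply TB_var; [exact HC|].
      split; [apply wf_restrict_subst, Hwf|split; [|apply atoms_restrict_subst]].
      pose proof (level_restrict_subst A S); lia.
    + intros x Hx; apply HA, in_flat_map; exists (C, t); auto.
  - eapply TB_app; eassumption.
  - apply TB_inter; assumption.
  - eapply TB_sub; [eassumption|apply restrict_sub; assumption].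
Qed.

Lemma repo_type_unique (D : repo) C t t' :
  repo_wf D -> In (C, t) D -> In (C, t') D -> t = t'.
Proof.
  unfold repo_wf; induction D as [|[c u] D IH]; simpl; intros Hwf H H'; [destruct H|].
  inversion Hwf as [|? ? Hc Hwf']; subst.
  destruct H as [H|H], H' as [H'|H'].
  - rewrite H in H'; injection H'; auto.
  - injection H as -> ->; contradiction Hc; apply in_map_iff; exists (C, t'); auto.
  - injection H' as -> ->; contradiction Hc; apply in_map_iff; exists (C, t); auto.
  - apply IH; assumption.
Qed.

Lemma apps_snoc E Es F : apps E (Es ++ [F]) = App (apps E Es) F.
Proof. unfold apps; rewrite fold_left_app; reflexivity. Qed.

Lemma tgt_Arr m p s u : tgt m p = Arr s u ->
  arity_ge (S m) p /\ arg m p = s /\ tgt (S m) p = u.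
Proof.
  revert p; induction m as [|m IH]; intros p H.
  - simpl in H; subst; repeat split.
  - destruct p; try discriminate; apply IH, H.
Qed.

Lemma tgt_is_path m p : arity_ge m p -> is_path p -> is_path (tgt m p).
Proof.
  revert p; induction m as [|m IH]; intros p Har Hp; [exact Hp|].
  destruct p; try destruct Har; inversion Hp; subst; apply IH; assumption.
Qed.

Lemma tgt_succ m l : tgt (S m) l = tgt m (tgt 1 l).
Proof. destruct l, m; reflexivity. Qed.

Lemma arg_succ i l : arg (S i) l = arg i (tgt 1 l).
Proof. destruct l, i; reflexivity. Qed.

Lemma arity_ge_succ m l : arity_ge (S m) l -> arity_ge m (tgt 1 l).
Proof. destruct l; simpl; tauto. Qed.

Lemma map_tgt0 l : map (tgt 0) l = l.
Proof. induction l as [|x l IH]; [reflexivity|exact (f_equal (cons x) IH)]. Qed.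

Definition accepts_arg (m : nat) (s p : ty) : bool :=
  match tgt m p with Arr s' _ => subb s s' | _ => false end.

Lemma accepts_arg_true m s p : accepts_arg m s p = true ->
  arity_ge (S m) p /\ sub s (arg m p).
Proof.
  unfold accepts_arg; destruct (tgt m p) as [| | |s' u| |] eqn:E; try discriminate.
  intros Hs; destruct (tgt_Arr m p s' u E) as [Har [-> _]].
  split; [exact Har|apply subb_true, Hs].
Qed.

Lemma arr_cods_tgt m s P : (forall p, In p P -> is_path (tgt m p)) ->
  flat_map (arr_cods s) (map (tgt m) P) = map (tgt (S m)) (filter (accepts_arg m s) P).
Proof.
  induction P as [|p P IH]; intros Hpath; [reflexivity|].
  assert (Hp : arr_cods s (tgt m p)
               = if accepts_arg m s p then [tgt (S m) p] else []).
  { unfold accepts_arg; specialize (Hpath p (or_introl eq_refl)).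
    destruct (tgt m p) as [| | |s' u|s' u|] eqn:E; try reflexivity; [|inversion Hpath].
    rewrite (proj2 (proj2 (tgt_Arr m p s' u E))); reflexivity. }
  cbn [map flat_map filter]; rewrite Hp, IH by (intros q Hq; apply Hpath; right; exact Hq).
  destruct (accepts_arg m s p); reflexivity.
Qed.

Lemma select_accepting m s t P :
  (forall p, In p P -> is_path (tgt m p)) ->
  sub (bigcap (map (tgt m) P)) (Arr s t) ->
  sub (bigcap (map (tgt (S m)) (filter (accepts_arg m s) P))) t.
Proof.
  intros Hpath Hsub.
  pose proof (arr_cods_mono _ _ s Hsub) as Hcod; simpl in Hcod.
  rewrite (proj2 (subb_true s s) (sub_refl s)), (bigcap_flat (arr_cods s)),
    arr_cods_tgt in Hcod by (reflexivity || exact Hpath).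
  exact Hcod.
Qed.

Lemma typed_by_apps_inv D (ok : subst -> Prop) C tC E t :
  repo_wf D -> In (C, tC) D -> typed_by D ok E t ->
  forall Es, E = apps (Comb C) Es ->
  exists P,
    (forall p, In p P ->
       (exists S, ok S /\ In p (paths (apply_subst S tC))) /\ arity_ge (length Es) p) /\
    sub (bigcap (map (tgt (length Es)) P)) t /\
    (forall i, i < length Es -> typed_by D ok (nth i Es (Comb C)) (bigcap (map (arg i) P))).
Proof.
  intros HD HC.
  induction 1 as [C' t S HC' HS|E F s t _ IHE HF _|E s t _ IHs _ IHt|E s t _ IH Hst];
    intros Es HE.
  - destruct Es as [|F Es _] using rev_ind;
      [|rewrite apps_snoc in HE; discriminate].
    injection HE as ->; rewrite (repo_type_unique D C t tC HD HC' HC).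
    exists (paths (apply_subst S tC)); split; [|split].
    + intros p Hp; split; [exists S; auto|exact I].
    + rewrite map_tgt0; apply bigcap_paths_sub.
    + simpl; intros i Hi; lia.
  - destruct Es as [|F' Es _] using rev_ind; [discriminate|].
    rewrite apps_snoc in HE; injection HE as HE ->.
    destruct (IHE Es HE) as [P [HP [Htgt Hargs]]].
    rewrite length_app, Nat.add_1_r; set (m := length Es) in *.
    assert (Htgt_path : forall p, In p P -> is_path (tgt m p)).
    { intros p Hp; destruct (HP p Hp) as [[S [_ Hin]] Har].
      apply tgt_is_path; [exact Har|apply (paths_is_path _ _ Hin)]. }
    exists (filter (accepts_arg m s) P); split; [|split].
    + intros p Hp; apply filter_In in Hp as [Hp Hacc].
      split; [apply HP, Hp|apply (accepts_arg_true m s p Hacc)].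
    + apply select_accepting; assumption.
    + intros i Hi; destruct (Nat.eq_dec i m) as [->|Hne].
      * replace (nth m (Es ++ [F']) (Comb C)) with F' by (symmetry; apply nth_middle).
        apply TB_sub with s; [exact HF|].
        apply bigcap_glb; intros x Hx; apply in_map_iff in Hx as [p [<- Hp]].
        apply filter_In in Hp as [_ Hacc]; apply (accepts_arg_true m s p Hacc).
      * rewrite app_nth1 by lia; apply TB_sub with (bigcap (map (arg i) P));
          [apply Hargs; lia|].
        apply bigcap_incl; intros x Hx; apply in_map_iff in Hx as [p [<- Hp]].
        apply filter_In in Hp as [Hp _]; apply in_map, Hp.
  - destruct (IHs Es HE) as [P1 [HP1 [Htgt1 Hargs1]]].
    destruct (IHt Es HE) as [P2 [HP2 [Htgt2 Hargs2]]].
    exists (P1 ++ P2); split; [|split].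
    + intros p Hp; apply in_app_or in Hp as [Hp|Hp]; auto.
    + rewrite map_app; apply sub_inter_intro.
      * apply sub_trans with (bigcap (map (tgt (length Es)) P1)); [|exact Htgt1].
        apply bigcap_incl, incl_appl, incl_refl.
      * apply sub_trans with (bigcap (map (tgt (length Es)) P2)); [|exact Htgt2].
        apply bigcap_incl, incl_appr, incl_refl.
    + intros i Hi; rewrite map_app; eapply TB_sub; [|apply bigcap_app].
      apply TB_inter; auto.
  - destruct (IH Es HE) as [P [HP [Htgt Hargs]]].
    exists P; split; [|split]; auto.
    apply sub_trans with s; assumption.
Qed.

Lemma bigcap_Arr_arg_tgt L : (forall l, In l L -> arity_ge 1 l) ->
  sub (bigcap L) (Arr (bigcap (map (arg 0) L)) (bigcap (map (tgt 1) L))).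
Proof.
  intros HL; apply sub_trans with (bigcap (map (Arr (bigcap (map (arg 0) L))) (map (tgt 1) L)));
    [|apply bigcap_map_Arr].
  rewrite map_map; apply bigcap_glb; intros x Hx; apply in_map_iff in Hx as [l [<- Hl]].
  apply sub_trans with l; [apply bigcap_lb, Hl|].
  destruct l as [| | |s u| |]; try destruct (HL _ Hl).
  apply sub_arr; [apply bigcap_lb, (in_map (arg 0) _ _ Hl)|apply sub_refl].
Qed.

Lemma typed_apps_intro D k E Es d L :
  (forall l, In l L -> arity_ge (length Es) l) -> typed D k E (bigcap L) ->
  (forall i, i < length Es -> typed D k (nth i Es d) (bigcap (map (arg i) L))) ->
  typed D k (apps E Es) (bigcap (map (tgt (length Es)) L)).
Proof.
  revert E L; induction Es as [|F Es IH]; intros E L HL HE Hargs.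
  - rewrite map_tgt0; exact HE.
  - change (typed D k (apps (App E F) Es) (bigcap (map (tgt (S (length Es))) L))).
    rewrite (map_ext _ _ (tgt_succ (length Es))), <- map_map.
    apply IH.
    + intros l' Hl'; apply in_map_iff in Hl' as [l [<- Hl]]; apply arity_ge_succ, HL, Hl.
    + apply T_app with (bigcap (map (arg 0) L)); [|apply (Hargs 0); simpl; lia].
      apply T_sub with (bigcap L); [exact HE|].
      apply bigcap_Arr_arg_tgt; intros l Hl; pose proof (HL l Hl) as Har.
      destruct l; try destruct Har; exact I.
    + intros i Hi; rewrite map_map, <- (map_ext _ _ (arg_succ i)).
      apply (Hargs (S i)); simpl; lia.
Qed.

Lemma list_choice {X Y : Type} (R : X -> Y -> Prop) (l : list X) :
  (forall x, In x l -> exists y, R x y) ->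
  exists l', (forall y, In y l' -> exists x, In x l /\ R x y) /\
             (forall x, In x l -> exists y, In y l' /\ R x y).
Proof.
  induction l as [|x l IH]; intros H.
  - exists []; split; intros ? [].
  - destruct (H x (or_introl eq_refl)) as [y Hy].
    destruct IH as [l' [H1 H2]]; [intros x' Hx'; apply H; right; exact Hx'|].
    exists (y :: l'); split.
    + intros y' [<-|Hy']; [exists x; split; [left|]; auto|].
      destruct (H1 y' Hy') as [x' [? ?]]; exists x'; split; [right|]; auto.
    + intros x' [<-|Hx']; [exists y; split; [left|]; auto|].
      destruct (H2 x' Hx') as [y' [? ?]]; exists y'; split; [right|]; auto.
Qed.

Lemma refine_paths m (P Q0 : list ty) :
  (forall q, In q Q0 -> is_path q) ->
  (forall p, In p P -> is_path p /\ arity_ge m p /\ exists q, In q Q0 /\ sub q p) ->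
  exists Q, (forall q, In q Q -> In q Q0 /\ arity_ge m q) /\
    sub (bigcap (map (tgt m) Q)) (bigcap (map (tgt m) P)) /\
    (forall i, i < m -> sub (bigcap (map (arg i) P)) (bigcap (map (arg i) Q))).
Proof.
  intros HQ0 HP.
  destruct (list_choice (fun p q => In q Q0 /\ sub q p) P) as [Q [HQ HPQ]];
    [intros p Hp; apply HP, Hp|].
  assert (Hrefine : forall p q, In p P -> In q Q0 -> sub q p ->
            arity_ge m q /\ (forall i, i < m -> sub (arg i p) (arg i q)) /\
            sub (tgt m q) (tgt m p)).
  { intros p q Hp Hq Hqp; destruct (HP p Hp) as [Hpath [Har _]].
    apply sub_path_arity; auto. }
  exists Q; split; [|split].
  - intros q Hq; destruct (HQ q Hq) as [p [Hp [Hq0 Hqp]]].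
    split; [exact Hq0|apply (Hrefine p q); assumption].
  - apply bigcap_map_sub; intros p Hp; destruct (HPQ p Hp) as [q [Hq [Hq0 Hqp]]].
    exists q; split; [exact Hq|apply (Hrefine p q); assumption].
  - intros i Hi; apply bigcap_map_sub; intros q Hq; destruct (HQ q Hq) as [p [Hp [Hq0 Hqp]]].
    exists p; split; [exact Hp|apply (Hrefine p q); assumption].
Qed.

Lemma typed_bigcap D k E l :
  typed D k E Omega -> (forall x, In x l -> typed D k E x) -> typed D k E (bigcap l).
Proof.
  intros H0; induction l as [|x [|y l] IH]; intros H; [exact H0|apply H; left; reflexivity|].
  apply T_inter; [apply H; left; reflexivity|].
  apply IH; intros z Hz; apply H; right; exact Hz.
Qed.

Lemma paths_bigcap_refine L t p : (exists u, In u L /\ sub u t) -> In p (paths t) ->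
  exists q, In q (paths (bigcap L)) /\ sub q p.
Proof.
  intros [u [Hu Hut]] Hp; apply sub_path_paths; [apply (paths_is_path _ _ Hp)|].
  apply sub_trans with u; [apply bigcap_lb, Hu|].
  apply sub_trans with t; [exact Hut|apply paths_sub, Hp].
Qed.

Lemma admissible_level D tau k S : admissible D tau k S -> wf_subst S /\ level_subst S <= k.
Proof. intros [Hwf [Hlev _]]; split; assumption. Qed.

Lemma typed_admissible D k E tau : typed D k E tau -> typed_by D (admissible D tau k) E tau.
Proof.
  intros Htyped.
  pose proof (typed_restrict D k (atoms_repo D ++ atoms_ty tau) _ _
                (incl_appl _ (incl_refl _)) Htyped) as Hrestr.
  rewrite restrict_id in Hrestr by apply incl_appr, incl_refl.
  exact Hrestr.
Qed.

Lemma typed_bigcap_instances D k C tC (Ss : list subst) :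
  In (C, tC) D -> (forall S, In S Ss -> wf_subst S /\ level_subst S <= k) ->
  typed D k (Comb C) (bigcap (map (fun S => apply_subst S tC) Ss)).
Proof.
  intros HC HSs; apply typed_bigcap.
  - apply T_sub with (apply_subst [] tC); [|apply sub_omega].
    apply T_var; [exact HC|constructor|apply Nat.le_0_l].
  - intros x Hx; apply in_map_iff in Hx as [S [<- HS]].
    destruct (HSs S HS); apply T_var; assumption.
Qed.

Theorem lemma4p11 (D : repo) (C : nat) (tC : ty) (Es : list term)
  (tau : ty) (k : nat) (Ss : list subst) :
  repo_wf D ->
  In (C, tC) D ->
  (forall S, In S Ss -> admissible D tau k S) ->
  (forall S, admissible D tau k S ->
     exists S', In S' Ss /\ ty_equiv (apply_subst S tC) (apply_subst S' tC)) ->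
  (typed D k (apps (Comb C) Es) tau <->
   exists P : list ty,
     (forall p, In p P ->
        In p (paths (bigcap (map (fun S => apply_subst S tC) Ss)))
        /\ arity_ge (length Es) p) /\
     sub (bigcap (map (tgt (length Es)) P)) tau /\
     (forall i, i < length Es ->
        typed D k (nth i Es (Comb C)) (bigcap (map (arg i) P)))).
Proof.
  intros HD HC HSs Hrep.
  set (X := bigcap (map (fun S => apply_subst S tC) Ss)).
  split.
  - intros Htyped.
    destruct (typed_by_apps_inv _ _ _ _ _ _ HD HC (typed_admissible _ _ _ _ Htyped) Es eq_refl)
      as [P [HP [Htgt Hargs]]].
    destruct (refine_paths (length Es) P (paths X)) as [Q [HQ [HQtgt HQargs]]].
    + apply paths_is_path.
    + intros p Hp; destruct (HP p Hp) as [[S [HS Hin]] Har].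
      destruct (Hrep S HS) as [S' [HS' [_ HS'S]]].
      split; [apply (paths_is_path _ _ Hin)|split; [exact Har|]].
      apply paths_bigcap_refine with (apply_subst S tC); [|exact Hin].
      exists (apply_subst S' tC); split; [apply in_map_iff; exists S'; auto|exact HS'S].
    + exists Q; split; [exact HQ|split].
      * apply sub_trans with (bigcap (map (tgt (length Es)) P)); assumption.
      * intros i Hi; apply T_sub with (bigcap (map (arg i) P)); [|apply HQargs, Hi].
        apply (typed_by_typed D k (admissible D tau k)); [|apply Hargs, Hi].
        apply (admissible_level D tau k).
  - intros [P [HP [Htgt Hargs]]].
    apply T_sub with (bigcap (map (tgt (length Es)) P)); [|exact Htgt].
    apply typed_apps_intro with (d := Comb C); [apply HP| |exact Hargs].
    apply T_sub with X; [|apply bigcap_glb; intros p Hp; apply paths_sub, HP, Hp].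
    apply typed_bigcap_instances; [exact HC|].
    intros S HS; apply (admissible_level D tau k), HSs, HS.
Qed.
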